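(* Let $\mathcal{L}:\mathbb{R}^n\to\mathbb{R}$ be a differentiable loss of the network weight $w$, reparameterized by hidden weight $\theta\in\mathbb{R}^n$ and a global scalar threshold $d\ge0$ as $w(\theta,d)=\mathcal{S}_d(\theta)$. Run vanilla SGD on the hidden weight with learning rate $\eta^{(t)}>0$ and threshold $d^{(t)}$ at iteration $t$: $$\theta^{(t+1)}=\theta^{(t)}-\eta^{(t)}\,\nabla_w\mathcal{L}(w^{(t)})\odot\nabla_\theta w(\theta^{(t)},d^{(t)}),\qquad w^{(t)}=\mathcal{S}_{d^{(t)}}(\theta^{(t)}),$$ where the $i$-th component of $\nabla_\theta w(\theta^{(t)},d^{(t)})$ is the derivative of $\theta\mapsto\mathcal{S}_{d^{(t)}}(\theta)$ at $\theta_i^{(t)}$ whenever $|\theta_i^{(t)}|\ne d^{(t)}$. Then the update is locally equivalent to ISTA applied to $$\min_w\Big\{F(w):=\mathcal{L}(w)+\frac{d^{(t+1)}-d^{(t)}}{\eta^{(t)}}\|w\|_1\Big\}$$ with step size $\eta^{(t)}$: namely, for every nonzero component $w_i^{(t)}\neq0$ with $|\theta_i^{(t+1)}|>d^{(t)}$ and $\operatorname{sign}(\theta_i^{(t+1)})=\operatorname{sign}(\theta_i^{(t)})$, one has $w_i^{(t+1)}=\big[\mathcal{S}_{\mu^{(t)}\eta^{(t)}}\big(w^{(t)}-\eta^{(t)}\nabla\mathcal{L}(w^{(t)})\big)\big]_i$ with $\mu^{(t)}=(d^{(t+1)}-d^{(t)})/\eta^{(t)}$, which is the ISTA update for the $L_1$-penalized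 objective $\mathcal{L}(w)+\mu^{(t)}\|w\|_1$.
   Context: $\odot$ is the element-wise product. The soft threshold mapping is $\mathcal{S}_d(x)_i=\operatorname{sign}(x_i)\max\{|x_i|-d,0\}$. The ISTA (proximal gradient) update with step size $\eta$ for $\min_x f(x)+\mu\|x\|_1$ is $x^{(t+1)}=\mathcal{S}_{\mu\eta}(x^{(t)}-\eta\nabla f(x^{(t)}))$. *)

From HB Require Import structures.
From mathcomp Require Import all_boot all_order all_algebra.
From mathcomp Require Import all_classical all_reals all_analysis.
Set Implicit Arguments. Unset Strict Implicit. Unset Printing Implicit Defensive.
Import Order.TTheory GRing.Theory Num.Theory.
Import numFieldNormedType.Exports.
Local Open Scope ring_scope.

Definition soft {R : realType} (d x : R) : R := Num.sg x * Num.max (`|x| - d) 0.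

Definition softv {R : realType} {n : nat} (d : R) (x : 'rV[R]_n) : 'rV[R]_n :=
  map_mx (soft d) x.

Definition hadamard {R : realType} {n : nat} (a b : 'rV[R]_n) : 'rV[R]_n :=
  \row_j (a 0 j * b 0 j).

Definition grad {R : realType} {n : nat} (L : 'rV[R]_n -> R) (w : 'rV[R]_n) : 'rV[R]_n :=
  \row_i ('d L w (delta_mx 0 i)).

From HB Require Import structures.
From mathcomp Require Import all_boot all_order all_algebra.
From mathcomp Require Import all_classical all_reals all_analysis.
Import Order.TTheory GRing.Theory Num.Theory.
Import numFieldNormedType.Exports.
Local Open Scope ring_scope.

(* Where |x| > d the soft threshold S_d is the translation x |-> x - sign(x) d,
   so its derivative there is 1 and the SGD step moves theta_i by exactly
   -eta dL/dw_i.  When theta_i keeps its sign and stays above the threshold,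
   w_i - eta dL/dw_i = theta_i^(t+1) - sign(theta_i^(t+1)) d^(t) is itself
   S_{d^(t)}(theta_i^(t+1)), and thresholding it further by d^(t+1) - d^(t)
   gives S_{d^(t+1)}(theta_i^(t+1)). *)

Section SoftThreshold.
Context {R : realType}.
Implicit Types a c d e g x : R.

Lemma soft_neq0_norm_gt d x : soft d x != 0 -> d < `|x|.
Proof.
by rewrite /soft ltNge; apply: contraNN => xd; rewrite (max_idPr _) ?mulr0 ?subr_le0.
Qed.

Lemma soft_outside d x : d <= `|x| -> soft d x = x - Num.sg x * d.
Proof. by move=> dx; rewrite /soft (max_idPl _) ?subr_ge0 // mulrBr -numEsg. Qed.

Lemma soft_soft c d x : d < `|x| -> soft c (soft d x) = soft (d + c) x.
Proof.
move=> dx; rewrite (soft_outside _ _ (ltW dx)).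
have [->|x0] := eqVneq x 0; first by rewrite /soft !(sgr0, mul0r, subr0).
have dx' : 0 < `|x| - d by rewrite subr_gt0.
rewrite {1}[x]numEsg -mulrBr /soft sgr_smul (gtr0_sg dx') mulr1.
by rewrite normrM normr_sg x0 mul1r (gtr0_norm dx') opprD addrA.
Qed.

Lemma near_sgr a : a != 0 -> \forall x \near a, Num.sg x = Num.sg a.
Proof.
rewrite neq_lt => /orP[a0|a0].
- by apply: filterS (lt_nbhsl a0) => x x0; rewrite !ltr0_sg.
- by apply: filterS (lt_nbhsr a0) => x x0; rewrite !gtr0_sg.
Qed.

Lemma near_lt_normr d a : d < `|a| -> \forall x \near a, d < `|x|.
Proof. by move=> da; have := @norm_continuous R R^o a _ (lt_nbhsr da). Qed.

Lemma is_derive_soft d a : 0 <= d -> d < `|a| -> is_derive a 1 (soft d) 1.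
Proof.
move=> d0 da; have a0 : a != 0 by rewrite -normr_gt0 (le_lt_trans d0 da).
have soft_affine : \forall x \near a, x - Num.sg a * d = soft d x.
  near=> x; rewrite soft_outside; last by apply/ltW; near: x; exact: near_lt_normr.
  by congr (_ - _ * _); apply/esym; near: x; exact: near_sgr.
apply: near_eq_is_derive soft_affine _.
by rewrite -[X in is_derive _ _ _ X]subr0; apply: is_deriveB.
Unshelve. all: by end_near. Qed.

Lemma soft_sgd_step_ista d d' e a g :
  d < `|a| -> d < `|a - e * g| -> Num.sg (a - e * g) = Num.sg a ->
  soft d' (a - e * g) = soft (d' - d) (soft d a - e * g).
Proof.
move=> da db sb; rewrite (soft_outside _ _ (ltW da)) addrAC -sb.
by rewrite -(soft_outside _ _ (ltW db)) soft_soft // addrCA subrr addr0.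
Qed.

End SoftThreshold.

Theorem theorem1 (R : realType) (n : nat) (L : 'rV[R]_n -> R)
  (theta : nat -> 'rV[R]_n) (d eta : nat -> R) (Dw : nat -> 'rV[R]_n) (t : nat) :
  (forall w, differentiable L w) ->
  (forall s, 0 <= d s) ->
  (forall s, 0 < eta s) ->
  (* Dw s = grad_theta w(theta^(s), d^(s)): componentwise derivative of S_{d s}
     wherever |theta_i| <> d (arbitrary otherwise) *)
  (forall s i, `|theta s 0 i| != d s ->
     is_derive (theta s 0 i) (1 : R) (soft (d s)) (Dw s 0 i)) ->
  (* vanilla SGD on hidden weights *)
  (forall s, theta s.+1 =
     theta s - eta s *: hadamard (grad L (softv (d s) (theta s))) (Dw s)) ->
  forall i : 'I_n,
    softv (d t) (theta t) 0 i != 0 ->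
    d t < `|theta t.+1 0 i| ->
    Num.sg (theta t.+1 0 i) = Num.sg (theta t 0 i) ->
    let mu := (d t.+1 - d t) / eta t in
    softv (d t.+1) (theta t.+1) 0 i =
    softv (mu * eta t)
      (softv (d t) (theta t) - eta t *: grad L (softv (d t) (theta t))) 0 i.
Proof.
(* The identity only involves the values of grad L, so differentiability is not needed. *)
move=> _ d_ge0 eta_gt0 Dw_derive sgd_step i w_neq0 d_lt_next sg_next mu.
have d_lt : d t < `|theta t 0 i| by move: w_neq0; rewrite mxE => /soft_neq0_norm_gt.
have Dw1 : Dw t 0 i = 1.
  have Dw_t := Dw_derive t i (negbT (gt_eqF d_lt)).
  have soft_t := is_derive_soft _ _ (d_ge0 t) d_lt.
  by rewrite -(@derive_val _ _ _ _ _ _ _ Dw_t) (@derive_val _ _ _ _ _ _ _ soft_t).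
rewrite /mu divfK ?gt_eqF // /softv !mxE.
rewrite sgd_step !mxE Dw1 mulr1 in sg_next d_lt_next *.
exact: soft_sgd_step_ista.
Qed.
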